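(* Let $N=(S,T,F,M_0,\ell)$ be a Petri net and $N'=(S',T',F',M'_0,\ell')$ be a plain net with $S'\subseteq S$ and $M'_0=M_0\upharpoonright S'$. Suppose there exist sets $T_+ \subseteq T$ and $T_-\subseteq T$ and a class $\mathcal{NF}\subseteq \mathbb{Z}^T$ (of finite signed multisets of transitions), such that (1) $F\upharpoonright(S\cup T_+)$ is acyclic; (2) $F\upharpoonright(S\cup T_-)$ is acyclic; (3) for every $t\in T$ with $\ell(t)\neq\tau$ there is a $t'\in T'$ with $\ell'(t')=\ell(t)$ such that ${}^\bullet t' \leq {}^*t$ and there is a finite multiset $G\in\mathbb{N}^T$ with $\ell(G)\equiv\emptyset$ and $[\![t']\!]=[\![t+G]\!]$; here ${}^*t$ is the multiset of faithful origins of $t$ w.r.t. $T_+$ and $S'\cup\{s\in S \mid M_0(s)>0\}$; (4) there exists a function $f:T\rightarrow\mathbb{N}$ with $f(t)>0$ for all $t\in T$, extended linearly to finite signed multisets ($f(G)=\sum_t G(t)\cdot f(t)$), such that for each finite $G\in \mathbb{Z}^T$ with $\ell(G)\equiv\emptyset$ there is a finite $H\in \mathcal{NF}$ with $\ell(H)\equiv\emptyset$, $[\![H]\!]=[\![G]\!]$ and $f(H)=f(G)$; and (5) for every reachable marking $M'$ of $N'$ there is a finite multiset $H_{M'}\in\mathbb{N}^{T_+}$ with $\ell(H_{M'})\equiv\emptyset$, such that for each finite $H\in \mathcal{NF}$ for which $M:=M'+(M_0-M'_0)+[\![H]\!]$ is a reachable marking of $N$ one has: (a) $M_{M'}:=M'+(M_0-M'_0)+[\![H_{M'}]\!]\in\mathbb{N}^S$;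 (b) if $M'$ enables a transition labelled $a\in\mathrm{Act}$ then $M_{M'}$ enables a transition labelled $a$; (c) $H\leq H_{M'}$; (d) if $H(u)<0$ then $u\in T_-$; (e) if $H(u)<0$ and $H(t)>0$ then ${}^\bullet u \cap {}^\bullet t = \emptyset$; (f) if $H(u)<0$ and $M$ enables $t$ with $\ell(t)\neq\tau$ then ${}^\bullet u \cap {}^\bullet t = \emptyset$. Then $N$ and $N'$ are interleaving branching bisimilar with explicit divergence.
   Context: Petri nets are labelled over $\mathrm{Act}\cup\{\tau\}$ with $\tau$ the invisible action; a net is plain if its labelling is injective and no transition is labelled $\tau$. For a transition $t$, ${}^\bullet t$ and $t^\bullet$ are the multisets of pre- and postplaces (given by arc weights), and the token replacement is $[\![t]\!]=t^\bullet-{}^\bullet t$, extended linearly to finite signed multisets of transitions. For a signed multiset $G$ of transitions, $\ell(G)\equiv\emptyset$ means every transition $t$ with $G(t)\neq 0$ has $\ell(t)=\tau$. Faithful origins: a path is an alternating sequence $x_0x_1\cdots x_n$ of places and transitions with $F(x_i,x_{i+1})>0$, its arc weight being $\prod_i F(x_i,x_{i+1})$; a place $s$ is faithful w.r.t. $T_+$ and $S_+$ iff $|\{s\}\cap S_+|+\sum_{t\in T_+}F(t,s)=1$; a path is faithful iff all nodes $x_i$ with $0\le i<n$ are transitions in $T_+$ or faithful places; and ${}^*x(s)$ is the supremum of the arc weights of faithful paths from $s\in S_+$ to $x$ (0 if none). Interleaving branching bisimilarity with explicit divergence is branching bisimilarity with explicit divergence of the labelled transition systems whose states are markings and whose transitions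 are single firings $M[t\rangle M'$ labelled $\ell(t)$. *)

(* Petri nets with arbitrary (possibly infinite) place and
   transition types; finite signed multisets of transitions are functions
   Tr -> Z with a finite (NoDup list) support. *)
From Stdlib Require Import ZArith List Relations.
Import ListNotations.
Set Implicit Arguments.

Local Open Scope Z_scope.

(* A labelled Petri net over places Pl, transitions Tr and visible actions Act.
   Labels are [option Act]; [None] is the invisible action tau. *)
Record net (Pl Tr Act : Type) := Net {
  pre  : Pl -> Tr -> nat;
  post : Tr -> Pl -> nat;
  m0   : Pl -> nat;
  lab  : Tr -> option Act
}.
Arguments pre {Pl Tr Act}.
Arguments post {Pl Tr Act}.
Arguments m0 {Pl Tr Act}.
Arguments lab {Pl Tr Act}.

Section Nets.
Context {Pl Tr Act : Type}.
Implicit Types (N : net Pl Tr Act).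

Definition plain N : Prop :=
  (forall t1 t2, lab N t1 = lab N t2 -> t1 = t2) /\ (forall t, lab N t <> None).

Definition enabled N (M : Pl -> nat) (t : Tr) : Prop :=
  forall s, (pre N s t <= M s)%nat.
Definition fire N (M : Pl -> nat) (t : Tr) : Pl -> nat :=
  fun s => (M s - pre N s t + post N t s)%nat.

Definition step N (M : Pl -> nat) (a : option Act) (M' : Pl -> nat) : Prop :=
  exists t, lab N t = a /\ enabled N M t /\ M' = fire N M t.

Definition reachable N (M : Pl -> nat) : Prop :=
  clos_refl_trans _ (fun M1 M2 => exists a, step N M1 a M2) (m0 N) M.

Definition tok N (t : Tr) (s : Pl) : Z := Z.of_nat (post N t s) - Z.of_nat (pre N s t).

Definition pre_disjoint N (u t : Tr) : Prop :=
  forall s, ~ ((0 < pre N s u)%nat /\ (0 < pre N s t)%nat).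

Definition invisible N (G : Tr -> Z) : Prop :=
  forall t, G t <> 0 -> lab N t = None.
End Nets.

Definition lsum {Tr : Type} (l : list Tr) (g : Tr -> Z) : Z :=
  fold_right (fun t acc => g t + acc) 0 l.
Definition fin_supp {Tr : Type} (G : Tr -> Z) (l : list Tr) : Prop :=
  NoDup l /\ forall t, G t <> 0 -> In t l.
Definition finite {Tr : Type} (G : Tr -> Z) : Prop := exists l, fin_supp G l.
Definition FinSum {Tr : Type} (G : Tr -> Z) (g : Tr -> Z) (v : Z) : Prop :=
  exists l, fin_supp G l /\ v = lsum l (fun t => G t * g t).

Definition Repl {Pl Tr Act} (N : net Pl Tr Act) (G : Tr -> Z) (s : Pl) (v : Z) : Prop :=
  FinSum G (fun t => tok N t s) v.
Definition same_repl {Pl Tr Act} (N : net Pl Tr Act) (G H : Tr -> Z) : Prop :=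
  forall s, exists v, Repl N G s v /\ Repl N H s v.
Definition same_fval {Tr} (f : Tr -> nat) (G H : Tr -> Z) : Prop :=
  exists v, FinSum G (fun t => Z.of_nat (f t)) v /\ FinSum H (fun t => Z.of_nat (f t)) v.

Definition marks_sum {Pl Tr Tr' Act} (N : net Pl Tr Act) (N' : net Pl Tr' Act)
  (M' : Pl -> nat) (H : Tr -> Z) (Mn : Pl -> nat) : Prop :=
  forall s, exists v, Repl N H s v /\
    Z.of_nat (Mn s) = Z.of_nat (M' s) + (Z.of_nat (m0 N s) - Z.of_nat (m0 N' s)) + v.

Definition flow {Pl Tr Act} (N : net Pl Tr Act) (x y : Pl + Tr) : nat :=
  match x, y with
  | inl s, inr t => pre N s t
  | inr t, inl s => post N t s
  | _, _ => 0%nat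
  end.

Definition acyclic_restr {Pl Tr Act} (N : net Pl Tr Act) (X : Tr -> Prop) : Prop :=
  let inP (x : Pl + Tr) := match x with inl _ => True | inr t => X t end in
  forall x, ~ clos_trans _ (fun a b => inP a /\ inP b /\ (0 < flow N a b)%nat) x x.

(* faithful place w.r.t. T+ and S+:  |{s} n S+| + sum_{t in T+} F(t,s) = 1 *)
Definition faithful_place {Pl Tr Act} (N : net Pl Tr Act) (Tp : Tr -> Prop) (Sp : Pl -> Prop)
  (s : Pl) : Prop :=
  (Sp s /\ forall t, Tp t -> post N t s = 0%nat) \/
  (~ Sp s /\ exists t, Tp t /\ post N t s = 1%nat /\
       forall t2, Tp t2 -> t2 <> t -> post N t2 s = 0%nat).

Definition faithful_node {Pl Tr Act} (N : net Pl Tr Act) (Tp : Tr -> Prop) (Sp : Pl -> Prop)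
  (x : Pl + Tr) : Prop :=
  match x with inl s => faithful_place N Tp Sp s | inr t => Tp t end.

Fixpoint faithful_path {Pl Tr Act} (N : net Pl Tr Act) (Tp : Tr -> Prop) (Sp : Pl -> Prop)
  (x : Pl + Tr) (xs : list (Pl + Tr)) : Prop :=
  match xs with
  | [] => True
  | y :: ys => faithful_node N Tp Sp x /\ (0 < flow N x y)%nat /\ faithful_path N Tp Sp y ys
  end.

Fixpoint path_weight {Pl Tr Act} (N : net Pl Tr Act) (x : Pl + Tr) (xs : list (Pl + Tr)) : nat :=
  match xs with
  | [] => 1%nat
  | y :: ys => (flow N x y * path_weight N y ys)%nat
  end.

(* n <= *x(s), where *x(s) is the supremum of the arc weights of faithful paths
   from s in S+ to x (0 if none).  Since weights are naturals, the supremum is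
   >= n iff n = 0 or some such path has weight >= n. *)
Definition origin_ge {Pl Tr Act} (N : net Pl Tr Act) (Tp : Tr -> Prop) (Sp : Pl -> Prop)
  (x : Pl + Tr) (s : Pl) (n : nat) : Prop :=
  n = 0%nat \/
  (Sp s /\ exists xs, faithful_path N Tp Sp (inl s) xs /\ last xs (inl s) = x /\
                      (n <= path_weight N (inl s) xs)%nat).

Section Bisim.
Context {A X Y : Type}.

Definition tau_star {Z0 : Type} (st : Z0 -> option A -> Z0 -> Prop) : Z0 -> Z0 -> Prop :=
  clos_refl_trans _ (fun p q => st p None q).

Definition bb_transfer {X0 Y0 : Type} (stX : X0 -> option A -> X0 -> Prop)
  (stY : Y0 -> option A -> Y0 -> Prop) (B : X0 -> Y0 -> Prop) : Prop :=
  forall p q a p', B p q -> stX p a p' ->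
    (a = None /\ B p' q) \/
    exists q1 q2, tau_star stY q q1 /\ stY q1 a q2 /\ B p q1 /\ B p' q2.

Definition div_transfer {X0 Y0 : Type} (stX : X0 -> option A -> X0 -> Prop)
  (stY : Y0 -> option A -> Y0 -> Prop) (B : X0 -> Y0 -> Prop) : Prop :=
  forall p q (ps : nat -> X0), B p q -> ps 0%nat = p ->
    (forall k, stX (ps k) None (ps (k + 1)%nat)) -> (forall k, B (ps k) q) ->
    exists qs : nat -> Y0, qs 0%nat = q /\ (forall l, stY (qs l) None (qs (l + 1)%nat)) /\
       forall k l, B (ps k) (qs l).

Definition bbisim_div (stX : X -> option A -> X -> Prop) (stY : Y -> option A -> Y -> Prop)
  (B : X -> Y -> Prop) : Prop :=
  bb_transfer stX stY B /\ bb_transfer stY stX (fun q p => B p q) /\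
  div_transfer stX stY B /\ div_transfer stY stX (fun q p => B p q).

Definition bbisimilar_div (stX : X -> option A -> X -> Prop) (stY : Y -> option A -> Y -> Prop)
  (x0 : X) (y0 : Y) : Prop :=
  exists B, bbisim_div stX stY B /\ B x0 y0.
End Bisim.

Definition net_ibbd {Pl Pl' Tr Tr' Act} (N : net Pl Tr Act) (N' : net Pl' Tr' Act) : Prop :=
  bbisimilar_div (step N) (step N') (m0 N) (m0 N').

(* Relate a marking M of N to a marking M' of N' when both are reachable and
   M = M' + (M0 - M'0) + [[G]] for some finite invisible G.  A tau step of N
   adds the fired transition to G.  A visible step t of N is matched by the t'
   of (3): replacing G by its normal form H, every token that t' needs on a
   place of S' can be followed along a faithful path to t, and the transitions
   of the positive part of H met on the way (which lie in T+, and are the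
   unique producers of the inner faithful places) account for it, so t' is
   enabled in M'.  A step of N' is matched after the tau run from M to M_{M'}
   that first undoes the negative part of H (acyclic in T-) and then fires
   H_{M'} minus the positive part of H (acyclic in T+); (b) provides the
   visible transition.  Finally N' is tau-free, and N cannot diverge from a
   related pair since every tau step raises f(G) by at least one while
   f(G) = f(H) <= f(H_{M'}) by (c). *)

From Stdlib Require Import ZArith List Relations Lia Permutation ClassicalEpsilon
  FunctionalExtensionality.
Import ListNotations.
Local Open Scope Z_scope.

Definition single {T : Type} (a y : T) : Z :=
  if excluded_middle_informative (y = a) then 1 else 0.

Definition merge {T : Type} (l1 l2 : list T) : list T :=
  nodup (fun x y => excluded_middle_informative (x = y)) (l1 ++ l2).

(** * Finite sums *)

Section ListSums.
Context {T : Type}.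
Implicit Types (l : list T) (g h : T -> Z).

Lemma lsum_ext l g h : (forall x, In x l -> g x = h x) -> lsum l g = lsum l h.
Proof. induction l; simpl; intros E; [|rewrite E, IHl]; auto. Qed.

Lemma lsum_add l g h : lsum l (fun x => g x + h x) = lsum l g + lsum l h.
Proof. induction l; simpl; lia. Qed.

Lemma lsum_opp l g : lsum l (fun x => - g x) = - lsum l g.
Proof. induction l; simpl; lia. Qed.

Lemma lsum_le l g h : (forall x, In x l -> g x <= h x) -> lsum l g <= lsum l h.
Proof.
  induction l; simpl; intros Hle; [lia|].
  specialize (IHl (fun x Hx => Hle x (or_intror Hx))); specialize (Hle a (or_introl eq_refl)). lia.
Qed.

Lemma lsum_nonneg l g : (forall x, In x l -> 0 <= g x) -> 0 <= lsum l g.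
Proof.
  induction l; simpl; intros Hg; [lia|].
  specialize (IHl (fun x Hx => Hg x (or_intror Hx))); specialize (Hg a (or_introl eq_refl)). lia.
Qed.

Lemma lsum_zero l g : (forall x, In x l -> g x = 0) -> lsum l g = 0.
Proof. intros Hg; rewrite (lsum_ext l g (fun _ => 0)) by auto; clear Hg. induction l; simpl; lia. Qed.

Lemma lsum_eq0_nonneg l g : (forall x, 0 <= g x) -> lsum l g = 0 -> forall x, In x l -> g x = 0.
Proof.
  intros Hg; induction l as [|a l IH]; simpl; intros Hs x Hx; [tauto|].
  pose proof (lsum_nonneg l g (fun y _ => Hg y)); pose proof (Hg a).
  destruct Hx as [<-|Hx]; [lia|apply IH; auto; lia].
Qed.

Lemma lsum_single l a g : NoDup l -> In a l -> lsum l (fun x => single a x * g x) = g a.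
Proof.
  induction l as [|b l IH]; simpl; intros Hnd Ha; [tauto|].
  inversion_clear Hnd as [|? ? Hb Hnd'].
  unfold single at 1; destruct (excluded_middle_informative (b = a)) as [<-|Hba].
  - rewrite lsum_zero; [lia|]. intros x Hx; unfold single.
    destruct (excluded_middle_informative (x = b)) as [->|]; [tauto|lia].
  - destruct Ha as [->|Ha]; [tauto|]. rewrite IH; auto; lia.
Qed.

Lemma lsum_single_le l a g : NoDup l -> 0 <= g a -> lsum l (fun x => single a x * g x) <= g a.
Proof.
  intros Hnd Hga; destruct (in_dec (fun x y => excluded_middle_informative (x = y)) a l).
  - now rewrite lsum_single.
  - rewrite lsum_zero; [lia|]. intros x Hx; unfold single.
    destruct (excluded_middle_informative (x = a)) as [->|]; [tauto|lia].
Qed.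

Lemma lsum_single_ge l a g : NoDup l -> In a l -> (forall x, In x l -> 0 <= g x) ->
  g a <= lsum l g.
Proof.
  intros Hnd Ha Hg; rewrite <- (lsum_single l a g) at 1 by auto.
  apply lsum_le; intros x Hx; specialize (Hg x Hx); unfold single.
  destruct (excluded_middle_informative (x = a)); lia.
Qed.

Lemma lsum_perm l1 l2 g : Permutation l1 l2 -> lsum l1 g = lsum l2 g.
Proof. induction 1; simpl; lia. Qed.

Lemma lsum_filter (p : T -> bool) l g :
  (forall x, In x l -> p x = false -> g x = 0) -> lsum (filter p l) g = lsum l g.
Proof.
  induction l as [|a l IH]; simpl; intros Hp; auto.
  destruct (p a) eqn:E; simpl; rewrite IH; auto. rewrite Hp; auto.
Qed.

End ListSums.

Section FiniteSupport.
Context {T : Type}.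
Implicit Types (G K F g : T -> Z) (l : list T).

Lemma lsum_supp_indep G g l1 l2 : fin_supp G l1 -> fin_supp G l2 ->
  lsum l1 (fun t => G t * g t) = lsum l2 (fun t => G t * g t).
Proof.
  intros [Hnd1 Hs1] [Hnd2 Hs2].
  set (p t := negb (G t =? 0)).
  assert (Hfilter : forall l, lsum (filter p l) (fun t => G t * g t) = lsum l (fun t => G t * g t)).
  { intros l; apply lsum_filter; intros x _ Hx; unfold p in Hx.
    apply Bool.negb_false_iff, Z.eqb_eq in Hx; rewrite Hx; lia. }
  rewrite <- (Hfilter l1), <- (Hfilter l2).
  apply lsum_perm, NoDup_Permutation; try apply NoDup_filter; auto.
  intros x; rewrite !filter_In; unfold p.
  split; intros [_ Hx]; (split; [|exact Hx]); [apply Hs2|apply Hs1];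
    intros E; rewrite E in Hx; discriminate.
Qed.

Lemma FinSum_lsum G g v l : FinSum G g v -> fin_supp G l -> v = lsum l (fun t => G t * g t).
Proof. intros [l' [Hl' ->]] Hl; now apply lsum_supp_indep. Qed.

Lemma FinSum_unique G g v w : FinSum G g v -> FinSum G g w -> v = w.
Proof. intros Hv [l [Hl ->]]; exact (FinSum_lsum G g v l Hv Hl). Qed.

Lemma fin_supp_merge G K F l1 l2 : fin_supp G l1 -> fin_supp K l2 ->
  (forall t, F t <> 0 -> G t <> 0 \/ K t <> 0) -> fin_supp F (merge l1 l2).
Proof.
  intros [_ HG] [_ HK] HF; split; [apply NoDup_nodup|].
  intros t Ht; apply nodup_In, in_or_app.
  destruct (HF t Ht); [left; apply HG|right; apply HK]; auto.
Qed.

Lemma fin_supp_single (a : T) : fin_supp (single a) [a].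
Proof.
  split; [repeat constructor; simpl; tauto|].
  intros t; unfold single; destruct (excluded_middle_informative (t = a)); simpl; [auto|lia].
Qed.

Lemma lsum_fin_supp_le G K g l1 l2 : fin_supp G l1 -> fin_supp K l2 ->
  (forall t, G t * g t <= K t * g t) ->
  lsum l1 (fun t => G t * g t) <= lsum l2 (fun t => K t * g t).
Proof.
  intros HG HK Hle.
  rewrite (lsum_supp_indep G g l1 (merge l1 l2)), (lsum_supp_indep K g l2 (merge l1 l2));
    auto using lsum_le; eapply fin_supp_merge; eauto.
Qed.

End FiniteSupport.

(** * Firing a nonnegative multiset of transitions in an acyclic part *)

Lemma acyclic_list_min {T : Type} (R : relation T) : (forall x, ~ clos_trans T R x x) ->
  forall l x, In x l ->
  exists m, In m l /\ clos_refl_trans T R m x /\ forall y, In y l -> ~ R y m.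
Proof.
  intros Hac l; induction l as [|a l IH]; simpl; [tauto|].
  assert (Ha : exists m, (a = m \/ In m l) /\ clos_refl_trans T R m a /\
                         forall y, a = y \/ In y l -> ~ R y m).
  { destruct (classic (exists y, In y l /\ R y a)) as [[y [Hy Rya]]|Hno].
    - destruct (IH y Hy) as [m [Hm [Hmy Hmin]]].
      exists m; split; [auto|split; [eapply rt_trans; [exact Hmy|now apply rt_step]|]].
      intros z [->|Hz] Rzm; [|exact (Hmin z Hz Rzm)].
      apply (Hac z), t_trans with m; [now apply t_step|].
      apply clos_rt_t with y; [exact Hmy|now apply t_step].
    - exists a; split; [auto|split; [apply rt_refl|]].
      intros y [->|Hy] Rya; [apply (Hac y); now apply t_step|apply Hno; eauto]. }
  intros x [<-|Hx]; [exact Ha|].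
  destruct (IH x Hx) as [m [Hm [Hmx Hmin]]].
  destruct (classic (R a m)) as [Ram|Ram].
  - destruct Ha as [m' [Hm' [Hm'a Hmin']]].
    exists m'; split; [auto|split; [|auto]].
    eapply rt_trans; [exact Hm'a|]. eapply rt_trans; [apply rt_step; exact Ram|exact Hmx].
  - exists m; split; [auto|split; [auto|]]. intros y [<-|Hy]; auto.
Qed.

Section Firing.
Context {Pl Tr Act : Type} (N : net Pl Tr Act).

Lemma fire_tok M t s : enabled N M t -> Z.of_nat (fire N M t s) = Z.of_nat (M s) + tok N t s.
Proof. intros Hen; specialize (Hen s); unfold fire, tok; lia. Qed.

Lemma step_fire M t : enabled N M t -> step N M (lab N t) (fire N M t).
Proof. intros Hen; now exists t. Qed.

Lemma reachable_step M a M1 : reachable N M -> step N M a M1 -> reachable N M1.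
Proof. intros Hr Hs; eapply rt_trans; [exact Hr|apply rt_step; eauto]. Qed.

Lemma reachable_tau_star M M1 : reachable N M -> tau_star (step N) M M1 -> reachable N M1.
Proof. intros Hr Ht; induction Ht; eauto using reachable_step. Qed.

Definition feeds (X : Tr -> Prop) (y x : Tr) : Prop :=
  X y /\ X x /\ exists p, (0 < post N y p)%nat /\ (0 < pre N p x)%nat.

Lemma feeds_acyclic X : acyclic_restr N X -> forall x, ~ clos_trans Tr (feeds X) x x.
Proof.
  intros Hac x Hc; apply (Hac (inr x)).
  enough (Hlift : forall y z, clos_trans Tr (feeds X) y z ->
    clos_trans _ (fun a b : Pl + Tr => (match a with inl _ => True | inr t => X t end) /\
      (match b with inl _ => True | inr t => X t end) /\ (0 < flow N a b)%nat) (inr y) (inr z))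
    by auto.
  induction 1 as [y z [Hy [Hz [p [Hyp Hpz]]]]|]; [|eapply t_trans; eauto].
  apply t_trans with (inl p); apply t_step; simpl; auto.
Qed.

Lemma exists_source X (D : Tr -> Z) l : acyclic_restr N X -> 0 < lsum l D ->
  exists m, In m l /\ 0 < D m /\ forall y, In y l -> 0 < D y -> ~ feeds X y m.
Proof.
  intros Hac Hpos; set (lf := filter (fun t => 0 <? D t) l).
  assert (Hlf : exists x, In x lf).
  { apply NNPP; intros Hno; enough (lsum l D <= 0) by lia.
    rewrite <- (lsum_zero l (fun _ => 0)) by auto; apply lsum_le; intros x Hx.
    destruct (Z_le_gt_dec (D x) 0) as [|Hx0]; auto; exfalso.
    apply Hno; exists x; apply filter_In; split; auto; lia. }
  destruct Hlf as [x Hx].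
  destruct (acyclic_list_min _ (feeds_acyclic X Hac) lf x Hx) as [m [Hm [_ Hmin]]].
  apply filter_In in Hm as [Hml Hdm]; apply Z.ltb_lt in Hdm.
  exists m; repeat split; auto; intros y Hy Hy0; apply Hmin, filter_In; split; auto; lia.
Qed.

(* No transition of the support, [m] itself included by acyclicity, produces on
   a preplace of [m]. *)
Lemma source_enabled X (D : Tr -> Z) l M m : acyclic_restr N X -> NoDup l ->
  (forall t, 0 <= D t) -> (forall t, D t <> 0 -> X t) ->
  In m l -> 0 < D m -> (forall y, In y l -> 0 < D y -> ~ feeds X y m) ->
  (forall s, 0 <= Z.of_nat (M s) + lsum l (fun t => D t * tok N t s)) ->
  enabled N M m.
Proof.
  intros Hac Hnd HD0 HX Hml Hdm Hmin Hfinal p.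
  destruct (Nat.eq_dec (pre N p m) 0) as [E|E]; [lia|].
  assert (Hfeeds : forall y, In y l -> 0 < D y -> post N y p = 0%nat).
  { intros y Hy Hy0; destruct (Nat.eq_dec (post N y p) 0) as [|Hyp]; auto; exfalso.
    assert (Hf : feeds X y m) by (repeat split; auto with zarith; exists p; lia).
    destruct (excluded_middle_informative (y = m)) as [->|]; [|exact (Hmin y Hy Hy0 Hf)].
    exact (feeds_acyclic X Hac m (t_step _ _ _ _ Hf)). }
  assert (Hbound : lsum l (fun t => D t * tok N t p) <= D m * tok N m p).
  { rewrite <- (lsum_single l m (fun t => D t * tok N t p)) by auto.
    apply lsum_le; intros y Hy; unfold single.
    destruct (excluded_middle_informative (y = m)) as [->|]; [lia|].
    specialize (HD0 y); destruct (Z.eq_dec (D y) 0) as [->|]; [lia|].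
    unfold tok; rewrite Hfeeds by (auto; lia); nia. }
  assert (tok N m p = - Z.of_nat (pre N p m)) by (unfold tok; rewrite Hfeeds; auto; lia).
  specialize (Hfinal p); nia.
Qed.

Lemma tau_star_fire_acyclic X : acyclic_restr N X ->
  forall (D : Tr -> Z) l M M2, fin_supp D l -> (forall t, 0 <= D t) ->
  (forall t, D t <> 0 -> X t) -> invisible N D ->
  (forall s, Z.of_nat (M2 s) = Z.of_nat (M s) + lsum l (fun t => D t * tok N t s)) ->
  tau_star (step N) M M2.
Proof.
  intros Hac D l M M2 [Hnd Hsupp] HD0 HX Hinv.
  remember (Z.to_nat (lsum l D)) as n eqn:En.
  assert (Hn : lsum l D = Z.of_nat n) by (subst; rewrite Z2Nat.id; auto using lsum_nonneg).
  clear En; revert D M Hsupp HD0 HX Hinv Hn.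
  induction n as [|n IH]; intros D M Hsupp HD0 HX Hinv Hn HM2.
  - replace M2 with M; [apply rt_refl|].
    apply functional_extensionality; intros s; apply Nat2Z.inj; rewrite HM2, lsum_zero; [lia|].
    intros t Ht; now rewrite (lsum_eq0_nonneg l D HD0 Hn t Ht).
  - destruct (exists_source X D l Hac ltac:(lia)) as [m [Hml [Hdm Hmin]]].
    assert (Hen : enabled N M m).
    { apply (source_enabled X D l); auto; intros s; rewrite <- HM2; lia. }
    eapply rt_trans; [apply rt_step; rewrite <- (Hinv m) by lia; now apply step_fire|].
    assert (Hsingle : forall P : Tr -> Prop, (forall t, D t <> 0 -> P t) ->
              forall t, D t - single m t <> 0 -> P t).
    { intros P HP t Ht; apply HP; unfold single in Ht;
        destruct (excluded_middle_informative (t = m)) as [->|]; lia. }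
    apply (IH (fun t => D t - single m t)); try apply Hsingle; auto.
    + intros t; specialize (HD0 t); unfold single;
        destruct (excluded_middle_informative (t = m)) as [->|]; lia.
    + exact (Hsingle (fun t => lab N t = None) Hinv).
    + rewrite (lsum_ext _ _ (fun t => D t + - (single m t * 1))) by (intros; lia).
      rewrite lsum_add, lsum_opp, lsum_single; auto; lia.
    + intros s; rewrite fire_tok, HM2 by auto.
      rewrite (lsum_ext l (fun t => (D t - single m t) * tok N t s)
                 (fun t => D t * tok N t s + - (single m t * tok N t s)))
        by (intros; ring).
      rewrite lsum_add, lsum_opp, lsum_single; auto; lia.
Qed.

End Firing.

Lemma faithful_path_weight_pos {Pl Tr Act} (N : net Pl Tr Act) Tp Sp x xs :
  faithful_path N Tp Sp x xs -> (0 < path_weight N x xs)%nat.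
Proof.
  revert x; induction xs as [|y xs IH]; simpl; intros x Hp; [lia|].
  destruct Hp as [_ [Hxy Hp]]; specialize (IH y Hp); nia.
Qed.

Lemma last_cons_default {T : Type} (x : T) l d : last (x :: l) d = last l x.
Proof.
  revert x d; induction l as [|y l IH]; intros x d; [reflexivity|].
  change (last (y :: l) d = last (y :: l) x); now rewrite !IH.
Qed.

(** * The bisimulation *)

Section Simulation.
Context {Pl Tr Tr' Act : Type} (N : net Pl Tr Act) (N' : net Pl Tr' Act) (S' : Pl -> Prop)
  (Tplus Tminus : Tr -> Prop) (NF : (Tr -> Z) -> Prop) (f : Tr -> nat).

Definition base (M' : Pl -> nat) (s : Pl) : Z :=
  Z.of_nat (M' s) + (Z.of_nat (m0 N s) - Z.of_nat (m0 N' s)).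

Lemma marks_sum_lsum M' G M l : marks_sum N N' M' G M -> fin_supp G l ->
  forall s, Z.of_nat (M s) = base M' s + lsum l (fun t => G t * tok N t s).
Proof. intros Hms Hl s; destruct (Hms s) as [v [Hv ->]]; now rewrite (FinSum_lsum _ _ v l Hv Hl). Qed.

Lemma marks_sum_intro M' G M l : fin_supp G l ->
  (forall s, Z.of_nat (M s) = base M' s + lsum l (fun t => G t * tok N t s)) ->
  marks_sum N N' M' G M.
Proof. intros Hl HM s; eexists; split; [now exists l|apply HM]. Qed.

Lemma marks_sum_repl M' G H M : marks_sum N N' M' G M -> same_repl N H G -> marks_sum N N' M' H M.
Proof.
  intros Hms Hrepl s; destruct (Hrepl s) as [v [HvH HvG]], (Hms s) as [w [HwG ->]].
  exists v; split; [exact HvH|]. now rewrite (FinSum_unique _ _ _ _ HvG HwG).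
Qed.

Lemma marks_sum_add M1' G M1 M2' K M2 lG lK :
  marks_sum N N' M1' G M1 -> fin_supp G lG -> fin_supp K lK ->
  (forall s, Z.of_nat (M2 s) - Z.of_nat (M2' s) =
             Z.of_nat (M1 s) - Z.of_nat (M1' s) + lsum lK (fun t => K t * tok N t s)) ->
  marks_sum N N' M2' (fun t => G t + K t) M2.
Proof.
  intros Hms HG HK HM2.
  assert (HG' : fin_supp G (merge lG lK)) by (eapply fin_supp_merge; eauto).
  assert (HK' : fin_supp K (merge lG lK)) by (eapply fin_supp_merge; eauto).
  apply marks_sum_intro with (merge lG lK).
  { eapply fin_supp_merge; eauto; intros t Ht; lia. }
  intros s; specialize (HM2 s); rewrite (marks_sum_lsum M1' G M1 _ Hms HG' s) in HM2.
  rewrite (lsum_supp_indep K _ lK (merge lG lK)) in HM2 by auto.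
  rewrite (lsum_ext _ _ (fun t => G t * tok N t s + K t * tok N t s)) by (intros; ring).
  rewrite lsum_add; unfold base in *; lia.
Qed.

Lemma marks_sum_fire_tau M' G M l t : marks_sum N N' M' G M -> fin_supp G l -> enabled N M t ->
  marks_sum N N' M' (fun u => G u + single t u) (fire N M t).
Proof.
  intros Hms Hl Hen; apply (marks_sum_add M' G M _ _ _ l [t] Hms Hl (fin_supp_single t)).
  intros s; rewrite fire_tok by auto; simpl; unfold single.
  destruct (excluded_middle_informative (t = t)); [lia|congruence].
Qed.

Lemma marks_sum_fire_sync M' G M l t t' Gt : marks_sum N N' M' G M -> fin_supp G l ->
  enabled N M t -> enabled N' M' t' -> finite Gt ->
  (forall s, exists v, Repl N Gt s v /\ tok N' t' s = tok N t s + v) ->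
  marks_sum N N' (fire N' M' t') (fun u => G u + - Gt u) (fire N M t).
Proof.
  intros Hms Hl Hen Hen' [lt Hlt] Htok.
  assert (Hlt' : fin_supp (fun u => - Gt u) lt) by (destruct Hlt; split; auto; intros u Hu; auto with zarith).
  apply (marks_sum_add M' G M _ _ _ l lt Hms Hl Hlt'); intros s.
  destruct (Htok s) as [v [Hv Hv']]; rewrite (FinSum_lsum _ _ v lt Hv Hlt) in Hv'.
  rewrite !fire_tok by auto.
  rewrite (lsum_ext _ _ (fun u => - (Gt u * tok N u s))) by (intros; ring).
  rewrite lsum_opp; lia.
Qed.

Definition related (M : Pl -> nat) (M' : Pl -> nat) : Prop :=
  reachable N M /\ reachable N' M' /\
  exists G, finite G /\ invisible N G /\ marks_sum N N' M' G M.

Lemma related_init : related (m0 N) (m0 N').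
Proof.
  split; [apply rt_refl|split; [apply rt_refl|]].
  assert (H0 : fin_supp (fun _ : Tr => 0) []) by (split; [constructor|intros t Ht; lia]).
  exists (fun _ => 0); split; [now exists []|split; [intros t Ht; lia|]].
  apply marks_sum_intro with []; auto; intros s; unfold base; simpl; lia.
Qed.

Lemma related_tau M M' M1 : related M M' -> step N M None M1 -> related M1 M'.
Proof.
  intros [Hr [Hr' [G [[l Hl] [Hi Hms]]]]] Hstep; pose proof Hstep as [t [Ht [Hen ->]]].
  split; [eapply reachable_step; eauto|split; [exact Hr'|]].
  exists (fun u => G u + single t u); split; [|split].
  - exists (merge l [t]); eapply fin_supp_merge; eauto using fin_supp_single; intros u Hu; lia.
  - intros u Hu; destruct (Z.eq_dec (G u) 0) as [E|]; auto.
    unfold single in Hu; destruct (excluded_middle_informative (u = t)) as [->|]; auto; lia.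
  - eapply marks_sum_fire_tau; eauto.
Qed.

Lemma related_sync M M' t t' Gt : related M M' -> enabled N M t -> enabled N' M' t' ->
  finite Gt -> invisible N Gt ->
  (forall s, exists v, Repl N Gt s v /\ tok N' t' s = tok N t s + v) ->
  related (fire N M t) (fire N' M' t').
Proof.
  intros [Hr [Hr' [G [[l Hl] [Hi Hms]]]]] Hen Hen' [lt Hlt] Hit Htok.
  split; [eapply reachable_step; eauto using step_fire|].
  split; [eapply reachable_step; eauto using step_fire|].
  exists (fun u => G u + - Gt u); split.
  - exists (merge l lt); eapply fin_supp_merge; eauto; intros u Hu; lia.
  - split; [intros u Hu; destruct (Z.eq_dec (G u) 0); [apply Hit; lia|auto]|].
    eapply marks_sum_fire_sync; eauto; now exists lt.
Qed.

Hypothesis places_N' : forall s t', ~ S' s -> pre N' s t' = 0%nat /\ post N' t' s = 0%nat.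
Hypothesis m0_N' : forall s, (S' s -> m0 N' s = m0 N s) /\ (~ S' s -> m0 N' s = 0%nat).

Lemma base_nonneg M' s : 0 <= base M' s.
Proof.
  unfold base; destruct (classic (S' s)) as [Hs|Hs];
    [rewrite (proj1 (m0_N' s) Hs)|rewrite (proj2 (m0_N' s) Hs)]; lia.
Qed.

Lemma reachable_outside M' s : reachable N' M' -> ~ S' s -> M' s = 0%nat.
Proof.
  intros Hr Hs.
  enough (Hinv : forall M1 M2, clos_refl_trans _ (fun M1 M2 => exists a, step N' M1 a M2) M1 M2 ->
                   M1 s = 0%nat -> M2 s = 0%nat) by (apply (Hinv (m0 N')); [exact Hr|now apply m0_N']).
  induction 1 as [M1 M2 [a [t [_ [_ ->]]]]| |]; auto.
  intros HM1; unfold fire; destruct (places_N' s t Hs); lia.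
Qed.

Definition origin_places (s : Pl) : Prop := S' s \/ (0 < m0 N s)%nat.

Lemma base_inner M' r : reachable N' M' -> ~ origin_places r -> base M' r = 0.
Proof.
  intros Hr Hnot; assert (~ S' r /\ m0 N r = 0%nat) as [HS Hm]
    by (unfold origin_places in Hnot; split; [tauto|lia]).
  unfold base; rewrite (reachable_outside M' r Hr HS), (proj2 (m0_N' r) HS), Hm; lia.
Qed.

Section Enabling.
Variables (M' M : Pl -> nat) (H : Tr -> Z) (lH : list Tr) (t : Tr).
Hypothesis reachable_M' : reachable N' M'.
Hypothesis supp_H : fin_supp H lH.
Hypothesis marks_M : marks_sum N N' M' H M.
Hypothesis pos_plus : forall u, 0 < H u -> Tplus u.
Hypothesis neg_pos_disjoint : forall u x, H u < 0 -> 0 < H x -> pre_disjoint N u x.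
Hypothesis neg_vis_disjoint : forall u x, H u < 0 -> enabled N M x -> lab N x <> None ->
  pre_disjoint N u x.
Hypothesis enabled_t : enabled N M t.
Hypothesis visible_t : lab N t <> None.

Definition production (r : Pl) : Z := lsum lH (fun u => Z.max 0 (H u) * Z.of_nat (post N u r)).

(* Transitions with a negative coefficient in [H] that do not consume from [r]
   can only remove tokens from it. *)
Lemma marking_le_production r : (forall u, H u < 0 -> pre N r u = 0%nat) ->
  Z.of_nat (M r) + lsum lH (fun u => Z.max 0 (H u) * Z.of_nat (pre N r u)) <=
  base M' r + production r.
Proof.
  intros Hneg; rewrite (marks_sum_lsum M' H M lH marks_M supp_H r); unfold production.
  enough (lsum lH (fun u => H u * tok N u r) + lsum lH (fun u => Z.max 0 (H u) * Z.of_nat (pre N r u))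
          <= lsum lH (fun u => Z.max 0 (H u) * Z.of_nat (post N u r))) by lia.
  rewrite <- lsum_add; apply lsum_le; intros u _; unfold tok.
  destruct (Z_lt_le_dec (H u) 0) as [Hu|Hu]; [rewrite (Hneg u Hu)|]; nia.
Qed.

Lemma production_source r : faithful_place N Tplus origin_places r -> origin_places r ->
  production r = 0.
Proof.
  intros [[_ Hnone]|[Hr _]] Hr'; [|contradiction].
  apply lsum_zero; intros u _; destruct (Z_lt_le_dec 0 (H u)) as [Hu|Hu];
    [rewrite Hnone by auto|]; lia.
Qed.

Lemma production_inner r x : faithful_place N Tplus origin_places r -> Tplus x ->
  (0 < post N x r)%nat ->
  ~ origin_places r /\ post N x r = 1%nat /\ production r <= Z.max 0 (H x).
Proof.
  intros [[_ Hnone]|[Hr [x' [Hx' [Hpost Hother]]]]] Hx Hxr; [specialize (Hnone x Hx); lia|].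
  assert (x' = x) as ->.
  { apply NNPP; intros Hne; specialize (Hother x Hx (fun E => Hne (eq_sym E))); lia. }
  split; [exact Hr|split; [exact Hpost|]]; unfold production.
  transitivity (Z.max 0 (H x) * Z.of_nat (post N x r)); [|rewrite Hpost; lia].
  eapply Z.le_trans; [|apply (lsum_single_le lH x (fun u => Z.max 0 (H u) * Z.of_nat (post N u r)));
    [apply supp_H|lia]].
  apply lsum_le; intros u _; unfold single.
  destruct (excluded_middle_informative (u = x)) as [->|Hux]; [lia|].
  destruct (Z_lt_le_dec 0 (H u)) as [Hu|Hu]; [rewrite Hother by auto|]; lia.
Qed.

Lemma faithful_path_bound n : forall ys r, (length ys <= n)%nat ->
  faithful_path N Tplus origin_places (inl r) ys -> last ys (inl r) = inr t ->
  Z.of_nat (path_weight N (inl r) ys) <= base M' r + production r.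
Proof.
  induction n as [|n IH]; intros [|[r1|y] ys1] r Hlen Hp Hlast; try discriminate;
    try (destruct Hp as [_ [Hp _]]; simpl in Hp; lia); [simpl in Hlen; lia|].
  destruct Hp as [_ [Hry Hp1]]; simpl in Hry |- *.
  assert (Hcons : forall x, In x lH -> 0 <= Z.max 0 (H x) * Z.of_nat (pre N r x))
    by (intros; apply Z.mul_nonneg_nonneg; lia).
  destruct ys1 as [|[r2|y2] ys2]; [| |destruct Hp1 as [_ [Hp1 _]]; simpl in Hp1; lia].
  - injection Hlast as ->.
    assert (Hneg : forall u, H u < 0 -> pre N r u = 0%nat).
    { intros u Hu; destruct (Nat.eq_dec (pre N r u) 0); auto.
      exfalso; apply (neg_vis_disjoint u t Hu enabled_t visible_t r); lia. }
    pose proof (marking_le_production r Hneg); pose proof (lsum_nonneg _ _ Hcons).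
    specialize (enabled_t r); simpl; lia.
  - destruct Hp1 as [Hy [Hyr2 Hp2]]; simpl in Hyr2.
    rewrite !last_cons_default in Hlast.
    assert (Hfr2 : faithful_place N Tplus origin_places r2)
      by (destruct ys2; [discriminate|exact (proj1 Hp2)]).
    destruct (production_inner r2 y Hfr2 Hy Hyr2) as [Hr2 [Hpost Hprod]].
    pose proof (IH ys2 r2 ltac:(simpl in Hlen; lia) Hp2 Hlast) as Hw2.
    rewrite (base_inner M' r2 reachable_M' Hr2) in Hw2.
    pose proof (faithful_path_weight_pos _ _ _ _ _ Hp2) as Hw2pos.
    assert (Hypos : 0 < H y) by lia.
    assert (Hneg : forall u, H u < 0 -> pre N r u = 0%nat).
    { intros u Hu; destruct (Nat.eq_dec (pre N r u) 0); auto.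
      exfalso; apply (neg_pos_disjoint u y Hu Hypos r); lia. }
    pose proof (marking_le_production r Hneg) as Hr.
    pose proof (lsum_single_ge lH y _ (proj1 supp_H) (proj2 supp_H y ltac:(lia)) Hcons) as Hcy.
    cbv beta in Hcy; rewrite Z.max_r in Hprod, Hcy by lia.
    simpl; rewrite Hpost, Nat.mul_1_l, Nat2Z.inj_mul.
    assert (Z.of_nat (path_weight N (inl r2) ys2) <= H y) by lia; nia.
Qed.

Lemma matching_enabled t' : (forall s, origin_ge N Tplus origin_places (inr t) s (pre N' s t')) ->
  enabled N' M' t'.
Proof.
  intros Hog s; destruct (Hog s) as [->|[Hs [ys [Hp [Hlast Hle]]]]]; [lia|].
  destruct (Nat.eq_dec (pre N' s t') 0) as [->|Hne]; [lia|].
  assert (HS : S' s) by (apply NNPP; intros HS; apply Hne, places_N', HS).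
  assert (Hfs : faithful_place N Tplus origin_places s)
    by (destruct ys; [discriminate|exact (proj1 Hp)]).
  pose proof (faithful_path_bound (length ys) ys s (le_n _) Hp Hlast) as Hbound.
  rewrite (production_source s Hfs Hs) in Hbound.
  unfold base in Hbound; rewrite (proj1 (m0_N' s) HS) in Hbound; lia.
Qed.

End Enabling.

Hypothesis acyclic_plus : acyclic_restr N Tplus.
Hypothesis acyclic_minus : acyclic_restr N Tminus.

Section Normalisation.
Variables (M' M MM : Pl -> nat) (H HM : Tr -> Z) (l : list Tr).
Hypothesis supp_H : fin_supp H l.
Hypothesis supp_HM : fin_supp HM l.
Hypothesis marks_M : marks_sum N N' M' H M.
Hypothesis marks_MM : marks_sum N N' M' HM MM.
Hypothesis HM_nonneg : forall u, 0 <= HM u.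
Hypothesis HM_plus : forall u, HM u <> 0 -> Tplus u.
Hypothesis invisible_HM : invisible N HM.
Hypothesis invisible_H : invisible N H.
Hypothesis H_le_HM : forall u, H u <= HM u.
Hypothesis neg_minus : forall u, H u < 0 -> Tminus u.
Hypothesis neg_pos_disjoint : forall u x, H u < 0 -> 0 < H x -> pre_disjoint N u x.

Lemma lsum_pos_part s : lsum l (fun u => Z.max 0 (H u) * tok N u s) =
  lsum l (fun u => H u * tok N u s) + lsum l (fun u => Z.max 0 (- H u) * tok N u s).
Proof.
  rewrite <- lsum_add; apply lsum_ext; intros u _.
  rewrite <- Z.mul_add_distr_r; f_equal; lia.
Qed.

(* Undoing the negative part of [H] is possible: a place consumed by it is
   consumed by no transition of the positive part (by (e)), otherwise it only
   gains tokens. *)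
Lemma pos_part_marking_nonneg s : 0 <= base M' s + lsum l (fun u => Z.max 0 (H u) * tok N u s).
Proof.
  destruct (classic (exists u, H u < 0 /\ (0 < pre N s u)%nat)) as [[u [Hu Hsu]]|Hno].
  - pose proof (base_nonneg M' s); enough (0 <= lsum l (fun x => Z.max 0 (H x) * tok N x s)) by lia.
    apply lsum_nonneg; intros x _; destruct (Z_lt_le_dec 0 (H x)) as [Hx|Hx]; [|lia].
    assert (pre N s x = 0%nat) by (apply NNPP; intros E; apply (neg_pos_disjoint u x Hu Hx s); lia).
    unfold tok; nia.
  - rewrite lsum_pos_part, Z.add_assoc, <- (marks_sum_lsum M' H M l marks_M supp_H s).
    enough (0 <= lsum l (fun x => Z.max 0 (- H x) * tok N x s)) by lia.
    apply lsum_nonneg; intros x _; destruct (Z_lt_le_dec (H x) 0) as [Hx|Hx]; [|lia].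
    assert (pre N s x = 0%nat) by (apply NNPP; intros E; apply Hno; exists x; split; [|lia]; auto).
    unfold tok; nia.
Qed.

Lemma tau_star_to_normal : tau_star (step N) M MM.
Proof.
  set (M2 s := Z.to_nat (base M' s + lsum l (fun u => Z.max 0 (H u) * tok N u s))).
  assert (HM2 : forall s, Z.of_nat (M2 s) = base M' s + lsum l (fun u => Z.max 0 (H u) * tok N u s))
    by (intros s; unfold M2; rewrite Z2Nat.id; auto using pos_part_marking_nonneg).
  destruct supp_H as [Hnd HsuppH].
  apply rt_trans with M2.
  - apply (tau_star_fire_acyclic N Tminus acyclic_minus (fun u => Z.max 0 (- H u)) l).
    + split; auto; intros u Hu; apply HsuppH; lia.
    + intros u; lia.
    + intros u Hu; apply neg_minus; lia.
    + intros u Hu; apply invisible_H; lia.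
    + intros s; rewrite HM2, (marks_sum_lsum M' H M l marks_M supp_H s), lsum_pos_part; lia.
  - apply (tau_star_fire_acyclic N Tplus acyclic_plus (fun u => HM u - Z.max 0 (H u)) l).
    + split; auto; intros u Hu; destruct (Z.eq_dec (HM u) 0); [apply HsuppH|apply supp_HM];
        specialize (H_le_HM u); lia.
    + intros u; specialize (H_le_HM u); specialize (HM_nonneg u); lia.
    + intros u Hu; apply HM_plus; specialize (H_le_HM u); lia.
    + intros u Hu; apply invisible_HM; specialize (H_le_HM u); lia.
    + intros s; rewrite HM2, (marks_sum_lsum M' HM MM l marks_MM supp_HM s).
      rewrite <- Z.add_assoc, <- lsum_add; f_equal; apply lsum_ext; intros u _; ring.
Qed.

End Normalisation.

Hypothesis plain_N' : plain N'.
Hypothesis visible_match : forall t, lab N t <> None ->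
  exists t', lab N' t' = lab N t /\
    (forall s, origin_ge N Tplus origin_places (inr t) s (pre N' s t')) /\
    exists G : Tr -> Z, finite G /\ (forall u, 0 <= G u) /\ invisible N G /\
      forall s, exists v, Repl N G s v /\ tok N' t' s = tok N t s + v.
Hypothesis f_pos : forall t, (0 < f t)%nat.
Hypothesis normal_form : forall G : Tr -> Z, finite G -> invisible N G ->
  exists H, NF H /\ finite H /\ invisible N H /\ same_repl N H G /\ same_fval f H G.
Hypothesis normal_form_props : forall M', reachable N' M' ->
  exists HM : Tr -> Z, finite HM /\ (forall u, 0 <= HM u) /\
    (forall u, HM u <> 0 -> Tplus u) /\ invisible N HM /\
    forall H : Tr -> Z, NF H -> finite H ->
    forall M : Pl -> nat, marks_sum N N' M' H M -> reachable N M ->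
      (exists MM : Pl -> nat, marks_sum N N' M' HM MM /\
         forall a, (exists t', lab N' t' = Some a /\ enabled N' M' t') ->
                   exists t, lab N t = Some a /\ enabled N MM t) /\
      (forall u, H u <= HM u) /\
      (forall u, H u < 0 -> Tminus u) /\
      (forall u t, H u < 0 -> 0 < H t -> pre_disjoint N u t) /\
      (forall u t, H u < 0 -> enabled N M t -> lab N t <> None -> pre_disjoint N u t).

Lemma normal_form_marks M' G M : finite G -> invisible N G -> marks_sum N N' M' G M ->
  exists H, NF H /\ finite H /\ invisible N H /\ marks_sum N N' M' H M /\ same_fval f H G.
Proof.
  intros HfG HiG Hms; destruct (normal_form G HfG HiG) as [H [HNF [HfH [HiH [Hrepl Hf]]]]].
  exists H; repeat split; auto; exact (marks_sum_repl M' G H M Hms Hrepl).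
Qed.

Lemma related_enables_match M M' t t' : related M M' -> enabled N M t -> lab N t <> None ->
  (forall s, origin_ge N Tplus origin_places (inr t) s (pre N' s t')) -> enabled N' M' t'.
Proof.
  intros [Hr [Hr' [G [HfG [HiG Hms]]]]] Hen Hvis Horig.
  destruct (normal_form_marks M' G M HfG HiG Hms) as [H [HNF [[lH HlH] [_ [HmsH _]]]]].
  destruct (normal_form_props M' Hr') as [HM [_ [_ [HM_plus [_ Hnf]]]]].
  destruct (Hnf H HNF (ex_intro _ lH HlH) M HmsH Hr) as [_ [Hle [_ [He Hf]]]].
  apply (matching_enabled M' M H lH t); auto.
  intros u Hu; apply HM_plus; specialize (Hle u); lia.
Qed.

Lemma related_transfer : bb_transfer (step N) (step N') related.
Proof.
  intros M M' a M1 Hrel [t [Hlab [Hen ->]]].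
  destruct (lab N t) as [b|] eqn:Eb.
  - right; subst a.
    destruct (visible_match t ltac:(congruence)) as [t' [Hl' [Horig [Gt [HfGt [_ [HiGt Htok]]]]]]].
    assert (Hen' : enabled N' M' t') by (eapply related_enables_match; eauto; congruence).
    exists M', (fire N' M' t'); split; [apply rt_refl|split; [exists t'; split; [congruence|auto]|]].
    split; [exact Hrel|eapply related_sync; eauto].
  - left; split; [auto|]; eapply related_tau; eauto; now exists t.
Qed.

Lemma related_transfer' : bb_transfer (step N') (step N) (fun M' M => related M M').
Proof.
  intros M' M a M'1 Hrel [t' [Hlab [Hen' ->]]]; right.
  destruct a as [b|]; [|exfalso; exact (proj2 plain_N' t' Hlab)].
  pose proof Hrel as [Hr [Hr' [G [HfG [HiG Hms]]]]].
  destruct (normal_form_marks M' G M HfG HiG Hms) as [H [HNF [[lH HlH] [HiH [HmsH _]]]]].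
  destruct (normal_form_props M' Hr') as [HM [[lHM HlHM] [HM_nonneg [HM_plus [HiHM Hnf]]]]].
  destruct (Hnf H HNF (ex_intro _ lH HlH) M HmsH Hr) as [[MM [HmsMM Hb]] [Hle [Hd [He _]]]].
  destruct (Hb b (ex_intro _ t' (conj Hlab Hen'))) as [t [Hlt Hen]].
  assert (Htau : tau_star (step N) M MM).
  { apply (tau_star_to_normal M' M MM H HM (merge lH lHM)); auto;
      eapply fin_supp_merge; eauto. }
  assert (HrelMM : related MM M').
  { split; [eapply reachable_tau_star; eauto|split; [exact Hr'|]].
    exists HM; split; [now exists lHM|auto]. }
  destruct (visible_match t ltac:(congruence)) as [t'' [Hl'' [_ [Gt [HfGt [_ [HiGt Htok]]]]]]].
  assert (t'' = t') as -> by (apply (proj1 plain_N'); congruence).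
  exists MM, (fire N MM t); split; [exact Htau|split; [exists t; auto|]].
  split; [exact HrelMM|eapply related_sync; eauto].
Qed.

Lemma tau_run_weight M' (ps : nat -> Pl -> nat) G0 l0 : fin_supp G0 l0 -> invisible N G0 ->
  marks_sum N N' M' G0 (ps 0%nat) -> (forall k, step N (ps k) None (ps (k + 1)%nat)) ->
  forall k, exists G l, fin_supp G l /\ invisible N G /\ marks_sum N N' M' G (ps k) /\
    lsum l0 (fun t => G0 t * Z.of_nat (f t)) + Z.of_nat k <= lsum l (fun t => G t * Z.of_nat (f t)).
Proof.
  intros Hl0 Hi0 Hms0 Hsteps k; induction k as [|k IH].
  - exists G0, l0; do 3 (split; [auto|]); lia.
  - destruct IH as [G [l [Hl [Hi [Hms Hw]]]]].
    destruct (Hsteps k) as [t [Ht [Hen Hps]]]; rewrite Nat.add_1_r in Hps.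
    exists (fun u => G u + single t u), (merge l [t]); split; [|split; [|split]].
    + eapply fin_supp_merge; eauto using fin_supp_single; intros u Hu; lia.
    + intros u Hu; destruct (Z.eq_dec (G u) 0) as [E|]; auto.
      unfold single in Hu; destruct (excluded_middle_informative (u = t)) as [->|]; auto; lia.
    + rewrite Hps; eapply marks_sum_fire_tau; eauto.
    + rewrite (lsum_ext (merge l [t]) (fun u => (G u + single t u) * Z.of_nat (f u))
                 (fun u => G u * Z.of_nat (f u) + single t u * Z.of_nat (f u)))
        by (intros; ring).
      assert (Hl' : fin_supp G (merge l [t])) by (eapply fin_supp_merge; eauto using fin_supp_single).
      assert (Ht' : In t (merge l [t])) by (apply nodup_In, in_or_app; simpl; auto).
      rewrite lsum_add, lsum_single, <- (lsum_supp_indep G _ l) by (auto; apply Hl').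
      specialize (f_pos t); lia.
Qed.

(* Each tau step raises the [f]-weight by at least one, whereas the normal
   forms of the reached markings are bounded by [HM], hence so is their weight. *)
Lemma related_no_divergence : div_transfer (step N) (step N') related.
Proof.
  intros M M' ps [_ [Hr' [G0 [[l0 Hl0] [Hi0 Hms0]]]]] Hps0 Hsteps Hrel; exfalso; subst M.
  destruct (normal_form_props M' Hr') as [HM [[lHM HlHM] [_ [_ [_ Hnf]]]]].
  set (K := S (Z.to_nat (lsum lHM (fun t => HM t * Z.of_nat (f t)) -
                         lsum l0 (fun t => G0 t * Z.of_nat (f t))))).
  destruct (tau_run_weight M' ps G0 l0 Hl0 Hi0 Hms0 Hsteps K) as [G [l [Hl [Hi [Hms Hw]]]]].
  destruct (normal_form_marks M' G (ps K) (ex_intro _ l Hl) Hi Hms)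
    as [H [HNF [[lH HlH] [_ [HmsH [v [HvH HvG]]]]]]].
  destruct (Hnf H HNF (ex_intro _ lH HlH) (ps K) HmsH (proj1 (Hrel K))) as [_ [Hle _]].
  rewrite <- (FinSum_lsum _ _ v l HvG Hl), (FinSum_lsum _ _ v lH HvH HlH) in Hw.
  assert (lsum lH (fun t => H t * Z.of_nat (f t)) <= lsum lHM (fun t => HM t * Z.of_nat (f t))).
  { apply lsum_fin_supp_le; auto; intros t; specialize (Hle t); nia. }
  unfold K in Hw; lia.
Qed.

Lemma related_no_divergence' : div_transfer (step N') (step N) (fun M' M => related M M').
Proof.
  intros M' M ps _ _ Hsteps _; exfalso.
  destruct (Hsteps 0%nat) as [t [Ht _]]; exact (proj2 plain_N' t Ht).
Qed.

Lemma related_bbisim_div : bbisim_div (step N) (step N') related.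
Proof.
  repeat split; auto using related_transfer, related_transfer', related_no_divergence,
    related_no_divergence'.
Qed.

End Simulation.

Theorem theorem6p11 (Pl Tr Tr' Act : Type)
  (N : net Pl Tr Act) (N' : net Pl Tr' Act) (S' : Pl -> Prop)
  (Tplus Tminus : Tr -> Prop) (NF : (Tr -> Z) -> Prop) :
  plain N' ->
  (forall s t', ~ S' s -> pre N' s t' = 0%nat /\ post N' t' s = 0%nat) ->
  (forall s, (S' s -> m0 N' s = m0 N s) /\ (~ S' s -> m0 N' s = 0%nat)) ->
  acyclic_restr N Tplus ->
  acyclic_restr N Tminus ->
  (forall t, lab N t <> None ->
     exists t', lab N' t' = lab N t /\
       (forall s, origin_ge N Tplus (fun s0 => S' s0 \/ (0 < m0 N s0)%nat)
                    (inr t) s (pre N' s t')) /\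
       exists G : Tr -> Z, finite G /\ (forall u, (0 <= G u)%Z) /\ invisible N G /\
         forall s, exists v, Repl N G s v /\ tok N' t' s = (tok N t s + v)%Z) ->
  (exists f : Tr -> nat, (forall t, (0 < f t)%nat) /\
     forall G : Tr -> Z, finite G -> invisible N G ->
       exists H, NF H /\ finite H /\ invisible N H /\ same_repl N H G /\ same_fval f H G) ->
  (forall M', reachable N' M' ->
     exists HM : Tr -> Z, finite HM /\ (forall u, (0 <= HM u)%Z) /\
       (forall u, HM u <> 0%Z -> Tplus u) /\ invisible N HM /\
       forall H : Tr -> Z, NF H -> finite H ->
       forall M : Pl -> nat, marks_sum N N' M' H M -> reachable N M ->
         (exists MM : Pl -> nat, marks_sum N N' M' HM MM /\
            forall a, (exists t', lab N' t' = Some a /\ enabled N' M' t') ->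
                      exists t, lab N t = Some a /\ enabled N MM t) /\
         (forall u, (H u <= HM u)%Z) /\
         (forall u, (H u < 0)%Z -> Tminus u) /\
         (forall u t, (H u < 0)%Z -> (0 < H t)%Z -> pre_disjoint N u t) /\
         (forall u t, (H u < 0)%Z -> enabled N M t -> lab N t <> None ->
                      pre_disjoint N u t)) ->
  net_ibbd N N'.
Proof.
  intros Hplain Hplaces Hm0 Hplus Hminus Hvisible [f [Hf Hnf]] Hprops.
  exists (related N N'); split; [|apply related_init].
  now apply (related_bbisim_div N N' S' Tplus Tminus NF f).
Qed.
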